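(* Let $T$ be a tree (without loops), $v$ a vertex of $T$ with neighbours $w_1,\dots,w_s$, and let $T_i$ be the connected component of $T\setminus v$ containing $w_i$. Then $\nu_2(T)-\nu_2(T\setminus v)\in\{0,1,2\}$ and: (i) $\nu_2(T)-\nu_2(T\setminus v)=2$ if and only if $v$ is saturated in $T$; (ii) $\nu_2(T)-\nu_2(T\setminus v)=1$ if and only if there exists $1\leq j\leq s$ such that the edge $vw_j$ is saturated in $T$ and $w_i$ is saturated in $T_i$ for all $i\neq j$; (iii) $\nu_2(T)-\nu_2(T\setminus v)=0$ if and only if $w_i$ is saturated in $T_i$ for all $1\leq i\leq s$.
   Context: A $2$-matching of a graph $G$ is a set of edges such that every vertex is incident to at most two of them; $\nu_2(G)$ is the maximum size of a $2$-matching and a $2$-matching of that size is called maximum. A vertex $w$ is saturated in $G$ if every maximum $2$-matching of $G$ has exactly two edges incident to $w$; an edge is saturated in $G$ if it belongs to every maximum $2$-matching of $G$. $T\setminus v$ denotes $T$ with the vertex $v$ and its incident edges deleted. *)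

(* Simple graphs on a finType V given by a symmetric,
   irreflexive relation e; subgraphs are induced subgraphs on a vertex set S. *)
From mathcomp Require Import all_boot.
Set Implicit Arguments. Unset Strict Implicit. Unset Printing Implicit Defensive.

Section Graphs.
Variables (V : finType) (e : rel V).

Definition edges_in (S : {set V}) : {set {set V}} :=
  [set f : {set V} | [exists x, exists y,
     [&& f == [set x; y], e x y, x \in S & y \in S]]].

Definition deg_in (F : {set {set V}}) (x : V) : nat := #|[set f in F | x \in f]|.

Definition is_2matching (S : {set V}) (F : {set {set V}}) : bool :=
  (F \subset edges_in S) && [forall x, deg_in F x <= 2].

Definition nu2 (S : {set V}) : nat :=
  \max_(F : {set {set V}} | is_2matching S F) #|F|.

Definition max_2matching (S : {set V}) (F : {set {set V}}) : bool :=
  is_2matching S F && (#|F| == nu2 S).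

Definition vsaturated (S : {set V}) (w : V) : Prop :=
  forall F, max_2matching S F -> deg_in F w = 2.

Definition esaturated (S : {set V}) (f : {set V}) : Prop :=
  forall F, max_2matching S F -> f \in F.

Definition is_tree : Prop :=
  (forall x y, connect e x y) /\
  (forall c : seq V, 3 <= size c -> ~~ ucycleb e c).

Definition rdel (v : V) : rel V := [rel x y | [&& x != v, y != v & e x y]].

Definition comp_del (v w : V) : {set V} := [set x | connect (rdel v) w x].

End Graphs.

(* Write T_w for the component of T \ v containing the neighbour w of v, and let U
   be the set of neighbours w that are not saturated in T_w.  As T is acyclic, w is
   the only neighbour of v in T_w, so every edge of T meeting T_w lies in the branch
   E(T_w) + vw, and the part of a 2-matching inside that branch may be exchanged for
   any 2-matching of T_w.  Exchanging for a maximum 2-matching of T_w shows that an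
   edge vw with w saturated in T_w can be dropped from a 2-matching of T at no cost,
   while for w in U a maximum 2-matching of T_w in which w has degree at most 1 lets
   one add vw with a gain of one.  Hence nu2(T) = nu2(T \ v) + min(2, |U|), every
   maximum 2-matching of T has min(2, |U|) edges from v into U, and some maximum
   2-matching has no other edges at v; the three cases of the theorem are |U| >= 2,
   |U| = 1 and U empty. *)

From mathcomp Require Import all_boot zify.
Set Implicit Arguments. Unset Strict Implicit. Unset Printing Implicit Defensive.

Lemma set2_inj (T : finType) (a : T) : injective (fun x => [set a; x]).
Proof.
move=> x y /= eq_axy.
have : x \in [set a; y] by rewrite -eq_axy set22.
case/set2P=> [xa|//]; have : y \in [set a; x] by rewrite eq_axy set22.
by rewrite xa setUid => /set1P.
Qed.

Lemma cardsU_disjoint (T : finType) (A B : {set T}) :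
  [disjoint A & B] -> #|A :|: B| = #|A| + #|B|.
Proof. by move=> dAB; apply/eqP; rewrite (leq_card_setU A B).2. Qed.

Section TwoMatchings.
Variables (V : finType) (e : rel V).
Implicit Types (S : {set V}) (f : {set V}) (M F : {set {set V}}) (x y : V).

Lemma edges_inP S f :
  reflect (exists x y, [/\ f = [set x; y], e x y, x \in S & y \in S])
          (f \in edges_in e S).
Proof.
rewrite inE; apply: (iffP existsP) => [[x /existsP[y /and4P[/eqP]]]|[x [y []]]].
  by exists x, y.
by move=> -> exy Sx Sy; exists x; apply/existsP; exists y; rewrite eqxx exy Sx Sy.
Qed.

Lemma edges_in_mem S f x : f \in edges_in e S -> x \in f -> x \in S.
Proof. by case/edges_inP=> a [b [-> _ Sa Sb]] /set2P[]->. Qed.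

Lemma edges_inS S S' : S \subset S' -> edges_in e S \subset edges_in e S'.
Proof.
move=> sSS'; apply/subsetP=> f /edges_inP[x [y [-> exy Sx Sy]]].
by apply/edges_inP; exists x, y; rewrite !(subsetP sSS').
Qed.

Lemma edges_in_setD1 S f x :
  f \in edges_in e S -> x \notin f -> f \in edges_in e (S :\ x).
Proof.
case/edges_inP=> a [b [-> eab Sa Sb]]; rewrite in_set2 negb_or => /andP[xa xb].
by apply/edges_inP; exists a, b; rewrite !in_setD1 !(eq_sym a) !(eq_sym b) xa xb.
Qed.

Lemma edges_in_set2 S x y : symmetric e -> [set x; y] \in edges_in e S -> e x y.
Proof.
move=> esym /edges_inP[a [b [xy_ab eab _ _]]].
have: x \in [set a; b] by rewrite -xy_ab set21.
have: y \in [set a; b] by rewrite -xy_ab set22.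
have: a \in [set x; y] by rewrite xy_ab set21.
have: b \in [set x; y] by rewrite xy_ab set22.
by do 4!case/set2P=> ?; subst; rewrite // esym.
Qed.

Definition nbrs_in M x := [set y | [set x; y] \in M].

Lemma nbrs_inU1 M x y : nbrs_in ([set x; y] |: M) x = y |: nbrs_in M x.
Proof. by apply/setP=> z; rewrite !inE (inj_eq (@set2_inj _ x)). Qed.

Lemma deg_in_nbrs S M x : M \subset edges_in e S -> deg_in M x = #|nbrs_in M x|.
Proof.
move=> sM; rewrite /deg_in -(card_imset _ (@set2_inj _ x)); apply: eq_card => f.
rewrite inE; apply/andP/imsetP=> [[Mf xf]|[y]]; last by rewrite inE => ? ->; rewrite set21.
have /edges_inP[a [b [fab _ _ _]]] := subsetP sM _ Mf.
move: xf Mf; rewrite fab => /set2P[]<- Mf; first by exists b; rewrite ?inE.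
by exists a; rewrite ?inE setUC.
Qed.

Lemma deg_inS M M' x : M \subset M' -> deg_in M x <= deg_in M' x.
Proof.
by move=> sMM'; apply/subset_leq_card/subsetP=> f; rewrite !inE => /andP[/(subsetP sMM') ->].
Qed.

Lemma deg_inU M M' x : deg_in (M :|: M') x <= deg_in M x + deg_in M' x.
Proof. by rewrite /deg_in !(setIdE (_ :|: _)) setIUl -!setIdE (leq_card_setU _ _).1. Qed.

Lemma deg_in_eq0 M x : (forall f, f \in M -> x \notin f) -> deg_in M x = 0.
Proof.
by move=> Mx; apply/eqP; rewrite cards_eq0; apply/eqP/setP=> f; rewrite !inE;
  apply/negbTE; rewrite negb_and; case: (boolP (f \in M)) => // /Mx.
Qed.

Lemma deg_inU1 f M x : f \notin M -> deg_in (f |: M) x = (x \in f) + deg_in M x.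
Proof.
move=> Mf; rewrite /deg_in; case: (boolP (x \in f)) => xf.
  rewrite (_ : [set g in f |: M | x \in g] = f |: [set g in M | x \in g]).
    by rewrite cardsU1 inE (negbTE Mf).
  by apply/setP=> g; rewrite !inE; case: eqP => // ->.
rewrite add0n; apply: eq_card => g; rewrite !inE.
by case: eqP => // ->; rewrite (negbTE xf) !andbF.
Qed.

Lemma deg_in1 f x : deg_in [set f] x = (x \in f).
Proof.
by rewrite -[[set f]]setU0 deg_inU1 ?inE // deg_in_eq0 ?addn0 // => g; rewrite inE.
Qed.

Lemma is_2matching_edges S M : is_2matching e S M -> M \subset edges_in e S.
Proof. by case/andP. Qed.

Lemma is_2matching_deg S M x : is_2matching e S M -> deg_in M x <= 2.
Proof. by case/andP=> _ /forallP. Qed.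

Lemma max_2matchingW S M : max_2matching e S M -> is_2matching e S M.
Proof. by case/andP. Qed.

Lemma is_2matching_sub S S' M M' : is_2matching e S M ->
  M' \subset M -> M' \subset edges_in e S' -> is_2matching e S' M'.
Proof.
case/andP=> _ /forallP degM sM'M sM'; rewrite /is_2matching sM'.
by apply/forallP=> x; apply: leq_trans (deg_inS x sM'M) (degM x).
Qed.

Lemma is_2matchingS S S' M : S \subset S' ->
  is_2matching e S M -> is_2matching e S' M.
Proof.
move=> sSS' mM; apply: (is_2matching_sub mM (subxx _)).
exact: subset_trans (is_2matching_edges mM) (edges_inS sSS').
Qed.

Lemma is_2matchingI S S' M :
  is_2matching e S M -> is_2matching e S' (M :&: edges_in e S').
Proof. by move=> mM; apply: is_2matching_sub mM (subsetIl _ _) (subsetIr _ _). Qed.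

Lemma is_2matchingU1 S M f : is_2matching e S M -> f \in edges_in e S ->
  (forall x, x \in f -> deg_in M x <= 1) -> is_2matching e S (f |: M).
Proof.
case/andP=> sM /forallP degM Ef degf; apply/andP; split.
  by apply/subsetP=> g /setU1P[->|/(subsetP sM)].
apply/forallP=> x; apply: leq_trans (deg_inU _ _ x) _.
by rewrite deg_in1; case: (boolP (x \in f)) => [/degf|_]; rewrite ?add0n.
Qed.

Lemma le_nu2 S M : is_2matching e S M -> #|M| <= nu2 e S.
Proof. exact: (@leq_bigmax_cond _ (is_2matching e S) (fun M => #|M|)). Qed.

Lemma exists_max_2matching S : exists M, max_2matching e S M.
Proof.
have: 0 < #|is_2matching e S|.
  apply/card_gt0P; exists set0; rewrite unfold_in /is_2matching sub0set.
  by apply/forallP=> x; rewrite deg_in_eq0 // => f; rewrite inE.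
case/(eq_bigmax_cond (fun M => #|M|))=> M mM nuM.
by exists M; move: mM; rewrite /max_2matching unfold_in /nu2 nuM eqxx andbT.
Qed.

Lemma card_2matching_del S M x : is_2matching e S M ->
  #|M| <= nu2 e (S :\ x) + deg_in M x.
Proof.
move=> mM; rewrite -(cardsID [set f : {set V} | x \in f] M) addnC /deg_in -setIdE.
rewrite leq_add2r le_nu2 // (is_2matching_sub mM (subsetDl _ _)) //.
apply/subsetP=> f /setDP[Mf]; rewrite inE => xf.
exact: edges_in_setD1 (subsetP (is_2matching_edges mM) _ Mf) xf.
Qed.

Definition vsaturatedb S x :=
  [forall M : {set {set V}}, max_2matching e S M ==> (deg_in M x == 2)].

Lemma vsaturatedP S x : reflect (vsaturated e S x) (vsaturatedb S x).
Proof.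
apply: (iffP forallP) => [sat M maxM|sat M]; first by apply/eqP; move: (sat M); rewrite maxM.
by apply/implyP=> /sat ->.
Qed.

End TwoMatchings.

Section VertexDeletion.
Variables (V : finType) (e : rel V) (v : V).
Hypotheses (esym : symmetric e) (eirr : irreflexive e) (etree : is_tree e).
Implicit Types (f : {set V}) (M F : {set {set V}}) (x y w : V).

Lemma rdel_path_notin x p : path (rdel e v) x p -> v \notin p.
Proof.
elim: p x => //= y p IHp x /andP[/and3P[_ yv _] /IHp].
by rewrite inE negb_or eq_sym yv.
Qed.

Lemma comp_del_neq w x : w != v -> x \in comp_del e v w -> x != v.
Proof.
move=> wv; rewrite inE => /connectP[p /rdel_path_notin vp ->].
by apply: contraTneq (mem_last w p) => ->; rewrite inE negb_or eq_sym wv.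
Qed.

Lemma comp_del_root w : w \in comp_del e v w.
Proof. by rewrite inE connect0. Qed.

Lemma comp_del_edge w x y : w != v -> x \in comp_del e v w -> e x y -> y != v ->
  y \in comp_del e v w.
Proof.
move=> wv Cx exy yv; have xv := comp_del_neq wv Cx; move: Cx; rewrite !inE => Cx.
by apply: connect_trans Cx (connect1 _); rewrite /rdel /= xv yv.
Qed.

Lemma nbr_neq x : e v x -> x != v.
Proof. by apply: contraTneq => ->; rewrite eirr. Qed.

Lemma comp_del_nbr w x : e v w -> x \in comp_del e v w -> e v x -> x = w.
Proof.
move=> evw Cx evx; apply/eqP; apply: contraT => xw; have wv := nbr_neq evw.
move: Cx; rewrite inE => /connectP[p pth lst].
case: (shortenP pth) lst => [[|y q] sp uq _] /= lst; first by rewrite lst eqxx in xw.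
have := rdel_path_notin sp; rewrite inE negb_or => /andP[vy vq].
have /andP[ewy ewq] : e w y && path e y q.
  by apply: (sub_path _ sp) => a b /and3P[].
(* the simple path [w, y & q] from w to x would close a cycle through v *)
case/negP: (etree.2 [:: v, w, y & q] isT).
have vwyq : v \notin [:: w, y & q] by rewrite !inE !negb_or (eq_sym v w) wv vy.
by rewrite /ucycleb (cycle_path v) /= -lst esym evx evw ewy ewq vwyq; exact: uq.
Qed.

Section Branch.
Variable w : V.
Hypothesis evw : e v w.
Local Notation Tw := (comp_del e v w).

Definition branch := [set v; w] |: edges_in e Tw.

Lemma v_notin_comp : v \notin Tw.
Proof. by apply/negP=> /(comp_del_neq (nbr_neq evw)); rewrite eqxx. Qed.

Lemma set2_notin_edges_comp x : [set v; x] \notin edges_in e Tw.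
Proof. by apply: contra v_notin_comp => /edges_in_mem; apply; rewrite set21. Qed.

Lemma edge_in_branch f x :
  f \in edges_in e [set: V] -> x \in Tw -> x \in f -> f \in branch.
Proof.
have edge_from_comp y z : e y z -> y \in Tw -> [set y; z] \in branch.
  move=> eyz Cy; have [zv|zv] := eqVneq z v.
    have yw : y = w by apply: comp_del_nbr evw Cy _; rewrite esym -zv.
    by rewrite yw zv setUC setU11.
  apply/setU1P; right; apply/edges_inP; exists y, z; split=> //.
  exact: comp_del_edge (nbr_neq evw) Cy eyz zv.
case/edges_inP=> a [b [-> eab _ _]] Cx /set2P[xa|xb]; subst x.
  exact: edge_from_comp.
by rewrite setUC; apply: edge_from_comp; rewrite // esym.
Qed.

Lemma card_branchI M :
  #|M :&: branch| = ([set v; w] \in M) + #|M :&: edges_in e Tw|.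
Proof.
rewrite setIUr cardsU_disjoint; last first.
  apply: disjointW (subsetIr _ _) (subsetIr _ _) _.
  by rewrite disjoints1 set2_notin_edges_comp.
congr (_ + _); rewrite setIC; case: (boolP (_ \in M)) => Mvw.
  by rewrite (setIidPl _) ?cards1 ?sub1set.
by rewrite (disjoint_setI0 _) ?cards0 ?disjoints1.
Qed.

Definition graft M F := (M :\: branch) :|: F.

Lemma deg_graft_in M F x : M \subset edges_in e [set: V] -> x \in Tw ->
  deg_in (graft M F) x <= deg_in F x.
Proof.
move=> sM Cx; apply: leq_trans (deg_inU _ _ x) _; rewrite deg_in_eq0 // => f /setDP[Mf].
by apply: contra => /(edge_in_branch (subsetP sM _ Mf) Cx).
Qed.

Lemma deg_graft_out M F x : F \subset edges_in e Tw -> x \notin Tw ->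
  deg_in (graft M F) x <= deg_in M x.
Proof.
move=> sF Cx; apply: leq_trans (deg_inU _ _ x) _.
have -> : deg_in F x = 0.
  by apply: deg_in_eq0 => f /(subsetP sF) Ef; exact: contra (edges_in_mem Ef) Cx.
by rewrite addn0 deg_inS ?subsetDl.
Qed.

Lemma is_2matching_graft M F : is_2matching e [set: V] M -> is_2matching e Tw F ->
  is_2matching e [set: V] (graft M F).
Proof.
move=> /andP[sM /forallP degM] /andP[sF /forallP degF]; apply/andP; split.
  by rewrite subUset (subset_trans (subsetDl _ _) sM) (subset_trans sF) ?edges_inS ?subsetT.
apply/forallP=> x; case: (boolP (x \in Tw)) => Cx.
  exact: leq_trans (deg_graft_in _ sM Cx) (degF x).
exact: leq_trans (deg_graft_out _ sF Cx) (degM x).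
Qed.

Lemma card_graft M F : F \subset edges_in e Tw ->
  #|graft M F| = #|M :\: branch| + #|F|.
Proof.
move=> sF; rewrite cardsU_disjoint // disjoint_sym.
apply: (disjointWl (subset_trans sF (subsetUr _ _) : F \subset branch)).
by rewrite disjoint_sym disjoints_subset setDE subsetIr.
Qed.

Lemma nbrs_graft M F : F \subset edges_in e Tw ->
  nbrs_in (graft M F) v = nbrs_in M v :\ w.
Proof.
move=> sF; apply/setP=> x; rewrite in_setD1 /nbrs_in in_set [in RHS]in_set.
rewrite /graft in_setU in_setD in_setU1.
rewrite (negbTE (set2_notin_edges_comp x)).
rewrite (contraNF (subsetP sF _)) ?set2_notin_edges_comp //.
by rewrite (inj_eq (@set2_inj _ v)) !orbF.
Qed.

End Branch.

Definition unsat_nbrs := [set w | e v w && ~~ vsaturatedb e (comp_del e v w) w].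
Local Notation U := unsat_nbrs.

Lemma nbrs_in_edge M x : is_2matching e [set: V] M -> x \in nbrs_in M v -> e v x.
Proof. by case/andP=> sM _; rewrite inE => /(subsetP sM)/(edges_in_set2 esym). Qed.

Lemma drop_saturated_nbr M w : is_2matching e [set: V] M ->
  w \in nbrs_in M v -> w \notin U ->
  exists M', [/\ is_2matching e [set: V] M', #|M| <= #|M'|
               & nbrs_in M' v = nbrs_in M v :\ w].
Proof.
move=> mM Mw wU; have evw := nbrs_in_edge mM Mw.
have /vsaturatedP wsat : vsaturatedb e (comp_del e v w) w by move: wU; rewrite inE evw negbK.
have [F /andP[mF /eqP nuF]] := exists_max_2matching e (comp_del e v w).
have sF := is_2matching_edges mF.
exists (graft w M F); split; [exact: is_2matching_graft | | exact: nbrs_graft].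
rewrite card_graft // -(cardsID (branch w) M) card_branchI // addnC leq_add2l.
set K := M :&: _; have mK : is_2matching e (comp_del e v w) K := is_2matchingI _ mM.
have Mvw : [set v; w] \in M by rewrite inE in Mw.
(* K lacks the edge vw at w, so it is not maximum in T_w, where w is saturated *)
have degKw : deg_in K w < 2.
  have Kvw : [set v; w] \notin K by rewrite inE negb_and (set2_notin_edges_comp evw) orbT.
  have sKM : [set v; w] |: K \subset M by rewrite subUset sub1set Mvw subsetIl.
  have := leq_trans (deg_inS w sKM) (is_2matching_deg w mM).
  by rewrite deg_inU1 // set22.
rewrite Mvw add1n nuF ltn_neqAle le_nu2 // andbT; apply: contraTneq degKw => nuK.
by rewrite (wsat K) // /max_2matching mK nuK eqxx.
Qed.

Lemma add_unsaturated_nbr M w : is_2matching e [set: V] M ->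
  w \in U -> w \notin nbrs_in M v -> deg_in M v <= 1 ->
  exists M', [/\ is_2matching e [set: V] M', #|M| < #|M'|
               & nbrs_in M' v = w |: nbrs_in M v].
Proof.
move=> mM; rewrite inE => /andP[evw /forallPn[F]].
rewrite negb_imply => /andP[maxF Fw] Mw degMv.
case/andP: maxF => mF /eqP nuF; have sF := is_2matching_edges mF.
have degFw : deg_in F w <= 1 by rewrite -ltnS ltn_neqAle Fw (is_2matching_deg w mF).
have Gvw : [set v; w] \notin graft w M F.
  by have := setD11 w (nbrs_in M v); rewrite -(nbrs_graft evw _ sF) in_set => ->.
exists ([set v; w] |: graft w M F); split.
- apply: is_2matchingU1 (is_2matching_graft evw mM mF) _ _.
    by apply/edges_inP; exists v, w; rewrite !inE.
  move=> x /set2P[]->.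
    exact: leq_trans (deg_graft_out M sF (v_notin_comp evw)) degMv.
  exact: leq_trans (deg_graft_in evw _ (is_2matching_edges mM) (comp_del_root w)) degFw.
- rewrite cardsU1 Gvw card_graft // add1n ltnS -(cardsID (branch w) M).
  move: Mw; rewrite inE => /negbTE Mw.
  rewrite card_branchI // addnC leq_add2l Mw add0n nuF.
  exact/le_nu2/is_2matchingI/mM.
- rewrite nbrs_inU1 nbrs_graft //; apply/setP=> x; rewrite !inE.
  by case: eqP.
Qed.

Lemma card_2matching_le_unsat M : is_2matching e [set: V] M ->
  #|M| <= nu2 e ([set: V] :\ v) + #|nbrs_in M v :&: U|.
Proof.
move En : #|nbrs_in M v :\: U| => n; elim: n M En => [|n IHn] M En mM.
  apply: leq_trans (card_2matching_del v mM) _.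
  rewrite (deg_in_nbrs v (is_2matching_edges mM)) (setIidPl _) // -setD_eq0.
  by rewrite -cards_eq0 En.
have [w wNU] : exists w, w \in nbrs_in M v :\: U by apply/card_gt0P; rewrite En.
have /setDP[Mw wU] := wNU; have [M' [mM' leMM' NM']] := drop_saturated_nbr mM Mw wU.
apply: leq_trans leMM' _; apply: leq_trans (IHn M' _ mM') _.
  move: En; rewrite (cardsD1 w) wNU add1n => /succn_inj <-.
  by rewrite NM' !setDDl setUC.
rewrite NM' (_ : (nbrs_in M v :\ w) :&: U = nbrs_in M v :&: U) //.
apply/setP=> x; rewrite !in_setI in_setD1.
by case: eqP => [->|] //=; rewrite (negbTE wU) andbF.
Qed.

Lemma exists_2matching_nbrs s : uniq s -> {subset s <= U} -> size s <= 2 ->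
  exists M, [/\ is_2matching e [set: V] M, nu2 e ([set: V] :\ v) + size s <= #|M|
              & nbrs_in M v = [set x in s]].
Proof.
elim: s => [_ _ _|w s IHs /= /andP[sw us] sU sz].
  have [N /andP[mN /eqP nuN]] := exists_max_2matching e ([set: V] :\ v).
  exists N; split; [exact: is_2matchingS (subsetT _) mN | by rewrite nuN addn0 |].
  apply/setP=> x; rewrite [RHS]inE in_nil /nbrs_in in_set; apply/negbTE.
  apply: (contra _ (negbT (setD11 v [set: V]))).
  by move=> /(subsetP (is_2matching_edges mN))/edges_in_mem; apply; rewrite set21.
have sU' : {subset s <= U} by move=> x xs; apply: sU; rewrite inE xs orbT.
have [M [mM nuM NM]] := IHs us sU' (ltnW sz).
have Mw : w \notin nbrs_in M v by rewrite NM inE.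
have degMv : deg_in M v <= 1.
  by rewrite (deg_in_nbrs v (is_2matching_edges mM)) NM cardsE (card_uniqP us).
have [M' [mM' ltMM' NM']] := add_unsaturated_nbr mM (sU w (mem_head w s)) Mw degMv.
exists M'; split=> //; first by rewrite addnS; apply: leq_ltn_trans ltMM'.
by rewrite NM' NM; apply/setP=> x; rewrite !inE.
Qed.

Lemma card_nbrs_unsat_le M : is_2matching e [set: V] M ->
  #|nbrs_in M v :&: U| <= minn 2 #|U|.
Proof.
case/andP=> sM /forallP degM; rewrite leq_min subset_leq_card ?subsetIr // andbT.
by apply: leq_trans (subset_leq_card (subsetIl _ _)) _; rewrite -(deg_in_nbrs v sM).
Qed.

Lemma exists_2matching_nbrs_unsat :
  exists M, [/\ is_2matching e [set: V] M, nu2 e ([set: V] :\ v) + minn 2 #|U| <= #|M|,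
             nbrs_in M v \subset U & #|nbrs_in M v| = minn 2 #|U|].
Proof.
have s0U : {subset take 2 (enum U) <= U} by move=> x /mem_take; rewrite mem_enum.
have us0 : uniq (take 2 (enum U)) by rewrite take_uniq ?enum_uniq.
have sz0 : size (take 2 (enum U)) = minn 2 #|U| by rewrite size_take -cardE.
have [|M [mM nuM NM]] := exists_2matching_nbrs us0 s0U; first by rewrite sz0 geq_minl.
exists M; split; rewrite -?sz0 ?NM ?cardsE ?(card_uniqP us0) //.
by apply/subsetP=> x; rewrite inE => /s0U.
Qed.

Lemma nu2_del_vertex : nu2 e [set: V] = nu2 e ([set: V] :\ v) + minn 2 #|U|.
Proof.
apply/eqP; rewrite eqn_leq; apply/andP; split.
  have [M /andP[mM /eqP <-]] := exists_max_2matching e [set: V].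
  by apply: leq_trans (card_2matching_le_unsat mM) _; rewrite leq_add2l card_nbrs_unsat_le.
by have [M [mM nuM _ _]] := exists_2matching_nbrs_unsat; apply: leq_trans nuM (le_nu2 mM).
Qed.

Lemma card_max_2matching_nbrs_unsat M : max_2matching e [set: V] M ->
  minn 2 #|U| <= #|nbrs_in M v :&: U|.
Proof.
case/andP=> mM /eqP nuM; rewrite -(leq_add2l (nu2 e ([set: V] :\ v))) -nu2_del_vertex -nuM.
exact: card_2matching_le_unsat.
Qed.

Lemma exists_max_2matching_nbrs_unsat :
  exists M, [/\ max_2matching e [set: V] M, nbrs_in M v \subset U
              & #|nbrs_in M v| = minn 2 #|U|].
Proof.
have [M [mM nuM NU NM]] := exists_2matching_nbrs_unsat.
exists M; split=> //; rewrite /max_2matching mM eqn_leq le_nu2 //=.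
by rewrite nu2_del_vertex.
Qed.

Lemma vsaturated_iff_unsat_nbrs : vsaturated e [set: V] v <-> 1 < #|U|.
Proof.
split=> [satv | U2 M maxM].
  have [M [maxM _ NM]] := exists_max_2matching_nbrs_unsat.
  have mM := max_2matchingW maxM.
  by move: (satv M maxM); rewrite (deg_in_nbrs v (is_2matching_edges mM)) NM; lia.
have mM := max_2matchingW maxM.
have := card_max_2matching_nbrs_unsat maxM.
have := subset_leq_card (subsetIl (nbrs_in M v) U).
have := is_2matching_deg v mM; rewrite (deg_in_nbrs v (is_2matching_edges mM)).
lia.
Qed.

Lemma esaturated_iff_unsat_nbrs :
  (exists wj, e v wj /\ esaturated e [set: V] [set v; wj] /\
     (forall wi, e v wi -> wi != wj -> vsaturated e (comp_del e v wi) wi))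
  <-> #|U| = 1.
Proof.
split=> [[wj [evwj [sat_vwj sat_other]]] | /eqP/cards1P[wj Uwj]].
  have [M [maxM NU _]] := exists_max_2matching_nbrs_unsat.
  have Uwj : wj \in U by apply: (subsetP NU); rewrite inE; apply: sat_vwj.
  apply/eqP/cards1P; exists wj; apply/eqP; rewrite eqEsubset sub1set Uwj andbT.
  apply/subsetP=> x; rewrite [x \in U]inE in_set1 => /andP[evx]; apply: contraNT => xwj.
  by apply/vsaturatedP; apply: sat_other.
have : wj \in U by rewrite Uwj set11.
rewrite inE => /andP[evwj _]; exists wj; split=> //; split.
  move=> M /card_max_2matching_nbrs_unsat; rewrite Uwj cards1 => /card_gt0P[x].
  by rewrite in_setI in_set1 => /andP[Nx /eqP xwj]; rewrite xwj inE in Nx.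
move=> wi evwi; rewrite -in_set1 -Uwj inE evwi /= negbK.
by move/vsaturatedP.
Qed.

Lemma branches_saturated_iff_unsat_nbrs :
  (forall wi, e v wi -> vsaturated e (comp_del e v wi) wi) <-> #|U| = 0.
Proof.
split=> [sat | U0 wi evwi].
  apply/eqP; rewrite cards_eq0 -subset0; apply/subsetP=> x.
  rewrite inE => /andP[evx /negP[]]; apply/vsaturatedP; exact: sat.
apply/vsaturatedP; apply: contraT => nsat.
have Uwi : wi \in U by rewrite inE evwi nsat.
by rewrite (card0_eq U0) in Uwi.
Qed.

End VertexDeletion.

Theorem lemma2p5 (V : finType) (e : rel V) (v : V) :
  symmetric e -> irreflexive e -> is_tree e ->
  let d := nu2 e [set: V] - nu2 e ([set: V] :\ v) in
  [/\ nu2 e ([set: V] :\ v) <= nu2 e [set: V], d <= 2,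
      (d = 2 <-> vsaturated e [set: V] v),
      (d = 1 <-> exists wj, e v wj /\ esaturated e [set: V] [set v; wj] /\
                  (forall wi, e v wi -> wi != wj ->
                     vsaturated e (comp_del e v wi) wi))
    & (d = 0 <-> forall wi, e v wi -> vsaturated e (comp_del e v wi) wi)].
Proof.
move=> esym eirr etree /=.
rewrite (nu2_del_vertex v esym eirr etree) addKn.
have sat_v := vsaturated_iff_unsat_nbrs v esym eirr etree.
have sat_edge := esaturated_iff_unsat_nbrs v esym eirr etree.
have sat_branches := branches_saturated_iff_unsat_nbrs e v.
split; [exact: leq_addr | exact: geq_minl | | |].
- apply: iff_trans (iff_sym sat_v); lia.
- apply: iff_trans (iff_sym sat_edge); lia.
- apply: iff_trans (iff_sym sat_branches); lia.
Qed.
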